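(* Let $D$ be a connected ribbon with $n$ boxes and $\alpha_1(D)=1$. If $c(D)>1/2+n/4$, then $\mathfrak r_D$ is not $p$-positive.
   Context: Boxes $(i,j)$ are indexed by row $i$ (top to bottom) and column $j$. A connected ribbon $D$ of composition $\alpha(D)=(\alpha_1(D),\dots,\alpha_\ell(D))$ has $\alpha_r(D)$ consecutive boxes in row $r$, with the leftmost box of row $r$ directly above the rightmost box of row $r+1$. A box $(i,j)$ of $D$ is a corner if $(i-1,j)\in D$ and $(i+1,j)\notin D$; $c(D)$ is the number of corners. $\mathfrak r_D=\sum_T x^{c(T)}$ over fillings $T$ of $D$ with letters of $\{1'<1<2'<2<\cdots\}$ having rows and columns weakly increasing, at most one unmarked $k$ per column and at most one marked $k'$ per row; $c(T)_i$ counts entries $i$ or $i'$. A symmetric function is $p$-positive if all its coefficients in the power sum basis are nonnegative. *)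

From HB Require Import structures.
From mathcomp Require Import all_boot all_order all_algebra.
Set Implicit Arguments. Unset Strict Implicit. Unset Printing Implicit Defensive.
Import Order.TTheory GRing.Theory Num.Theory.

(* A connected ribbon is given by its composition alpha = (alpha_1,...,alpha_l),
   a sequence of positive integers.  Rows are 0-indexed from the top
   (row r here = row r+1 of the paper), columns are 0-indexed from the left
   with the bottom row starting at column 0. *)

Definition is_composition (alpha : seq nat) : bool := all (fun a => 0 < a) alpha.

(* leftmost column of row i: left(last) = 0 and
   left(i) = left(i+1) + alpha_(i+1) - 1, i.e. the leftmost box of row i lies
   directly above the rightmost box of row i+1. *)
Definition lcol (alpha : seq nat) (i : nat) : nat :=
  sumn [seq a.-1 | a <- drop i.+1 alpha].

Definition inD (alpha : seq nat) (i j : nat) : bool :=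
  (i < size alpha) && (lcol alpha i <= j) && (j < lcol alpha i + nth 0 alpha i).

(* grid size large enough to contain every box of D(alpha) *)
Definition gsz (alpha : seq nat) : nat := (sumn alpha).+1.

Definition cell (alpha : seq nat) := ('I_(gsz alpha) * 'I_(gsz alpha))%type.

Definition corners (alpha : seq nat) : nat :=
  #|[pred p : cell alpha |
      [&& inD alpha p.1 p.2, 0 < (p.1 : nat), inD alpha (p.1 : nat).-1 p.2
        & ~~ inD alpha (p.1 : nat).+1 p.2]]|.

(* Letters 1' < 1 < 2' < 2 < ... are encoded by natural numbers:
   k' |-> 2(k-1) (even = marked), k |-> 2(k-1)+1 (odd = unmarked);
   the order on letters is the order on codes, and the underlying value
   k of a code a is a./2 + 1.  A filling using only letters in {1',...,N}
   is a finite function on the grid cells with values in option 'I_(2N),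
   equal to None exactly outside D. *)
Definition filling (alpha : seq nat) (N : nat) :=
  {ffun cell alpha -> option 'I_(2 * N)}.

Definition valid_filling (alpha : seq nat) (N : nat) (T : filling alpha N) : bool :=
  [forall p : cell alpha, (T p == None) == ~~ inD alpha p.1 p.2] &&
  [forall p : cell alpha, forall q : cell alpha,
     match T p, T q with
     | Some a, Some b =>
       [&&
           ((p.1 == q.1) && ((p.2 : nat) < q.2)) ==> ((a : nat) <= b),
           ((p.2 == q.2) && ((p.1 : nat) < q.1)) ==> ((a : nat) <= b),
           (* at most one unmarked k per column *)
           [&& p.2 == q.2, p != q & odd a] ==> ((a : nat) != b)
         & (* at most one marked k' per row *)
           [&& p.1 == q.1, p != q & ~~ odd a] ==> ((a : nat) != b)]
     | _, _ => true
     end].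

(* c(T)_k (0-indexed k, i.e. the letter k+1): number of entries k+1 or (k+1)' *)
Definition content_at (alpha : seq nat) (N : nat) (T : filling alpha N) (k : nat) : nat :=
  #|[pred p : cell alpha | if T p is Some a then (a : nat)./2 == k else false]|.

(* coefficient of the monomial x^mu (mu = (mu_1,...,mu_N), x_i^{mu_i}) in r_D *)
Definition rD_coef (alpha : seq nat) (mu : seq nat) : nat :=
  #|[pred T : filling alpha (size mu) | valid_filling T &&
       [forall k : 'I_(size mu), content_at T k == nth 0 mu k]]|.

(* coefficient of x^mu in the power sum p_lambda = prod_i (sum_j x_j^{lambda_i}) *)
Definition psum_coef (lambda mu : seq nat) : nat :=
  #|[pred f : {ffun 'I_(size lambda) -> 'I_(size mu)} |
      [forall j : 'I_(size mu), (\sum_(i | f i == j) nth 0 lambda i) == nth 0 mu j]]|.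

Definition is_partition (lambda : seq nat) : bool :=
  sorted geq lambda && all (fun a => 0 < a) lambda.

Definition p_positive (coef : seq nat -> nat) : Prop :=
  exists (L : seq (seq nat)) (c : seq nat -> rat),
    all is_partition L /\ (forall l, 0 <= c l)%R /\
    forall mu : seq nat,
      ((coef mu)%:R = \sum_(l <- L) c l * (psum_coef l mu)%:R)%R.

From HB Require Import structures.
From mathcomp Require Import all_boot all_order all_algebra zify lra.
Import Order.TTheory GRing.Theory Num.Theory.
Set Implicit Arguments. Unset Strict Implicit. Unset Printing Implicit Defensive.

(* Let n be the number of boxes of the ribbon D and compare
   the coefficients  A = [x_1^n] r_D  and  B = [x_1^(n-1) x_2] r_D.
   - Upper bound (A <= 2): in a filling by the letters 1', 1 every box that is
     not leftmost in its row holds 1 (a row has at most one 1'), and every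
     leftmost box lying above another row holds 1' (a column has at most one
     1); only the bottom-left box is free.
   - Lower bound (B >= 4 #R + 4 #R'): call a row i > 0 a corner row if its
     rightmost box can be a corner (the row has length > 1 or is the last row);
     R' are the corner rows that are not the last row.  Putting 2 or 2' in the
     rightmost box of a corner row i and choosing freely 1 or 1' in the
     leftmost box of row i-1 and (if i is not the last row) in the bottom-left
     box gives that many distinct fillings.
   - Power sums: the coefficient of x_1^(n-1) x_2 in p_lambda is at most n
     times that of x_1^n, so p-positivity forces B <= n A <= 2n.
   - Every corner is the rightmost box of a corner row: c(D) <= #R <= #R' + 1.
   Hence 4 c(D) <= n + 2, which contradicts c(D) > 1/2 + n/4.  The hypothesis
   alpha_1 = 1 is only used to know that the ribbon is nonempty. *)

Lemma sumn_pred (s : seq nat) : sumn [seq x.-1 | x <- s] <= sumn s.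
Proof. by elim: s => //= x s IH; lia. Qed.

Lemma sumn_drop k (s : seq nat) : sumn (drop k s) <= sumn s.
Proof. by rewrite -{2}(cat_take_drop k s) sumn_cat leq_addl. Qed.

Lemma sumn_big (s : seq nat) : sumn s = \sum_(i < size s) nth 0 s i.
Proof. by rewrite sumnE (big_nth 0) big_mkord. Qed.

Lemma sum_interval g m k : m + k <= g ->
  \sum_(j < g) ((m <= j) && (j < m + k) : nat) = k.
Proof.
move=> le_mk_g; rewrite -(big_mkord xpredT (fun j => ((m <= j) && (j < m + k) : nat))).
rewrite (big_cat_nat _ (n := m)) //=; last lia.
rewrite (big_cat_nat _ (n := m + k) (m := m)) //=; last lia.
rewrite (eq_big_nat _ _ (F2 := fun=> 0)); last by move=> j /andP[_ lt_jm]; rewrite leqNgt lt_jm.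
rewrite (eq_big_nat _ _ (m := m) (F2 := fun=> 1)); last by move=> j /andP[-> ->].
rewrite (eq_big_nat _ _ (m := m + k) (F2 := fun=> 0)); last first.
  by move=> j /andP[le_j _]; rewrite ltnNge le_j andbF.
by rewrite !sum_nat_const_nat; lia.
Qed.

Section RibbonGeometry.
Variable alpha : seq nat.
Hypothesis alpha_comp : is_composition alpha.
Local Notation a r := (nth 0 alpha r).
Local Notation L r := (lcol alpha r).
Local Notation l := (size alpha).

Lemma part_pos r : r < l -> 0 < a r.
Proof. by move=> lt_r; move/all_nthP: alpha_comp; apply. Qed.

Lemma lcolS r : r.+1 < l -> L r = L r.+1 + (a r.+1).-1.
Proof. by move=> lt_r; rewrite /lcol (drop_nth 0 lt_r) /= addnC. Qed.

Lemma lcol_last r : l <= r.+1 -> L r = 0.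
Proof. by move=> le_r; rewrite /lcol drop_oversize. Qed.

Lemma rows_below_end r k : r + k.+1 < l -> L (r + k.+1) + a (r + k.+1) <= (L r).+1.
Proof.
elim: k => [|k IH] lt_rk.
  by rewrite addn1 in lt_rk *; rewrite (lcolS lt_rk); have := part_pos lt_rk; lia.
have lt_rk' : r + k.+1 < l by lia.
have := IH lt_rk'; have := part_pos lt_rk'; have := part_pos lt_rk.
by rewrite addnS in lt_rk *; rewrite (lcolS lt_rk); lia.
Qed.

Lemma column_meet r r' j : inD alpha r j -> inD alpha r' j -> r < r' ->
  j = L r /\ j.+1 = L r' + a r'.
Proof.
rewrite /inD => /andP[/andP[_ le_Lj] lt_j] /andP[/andP[lt_r' le_L'j] lt_j'] lt_rr'.
have := @rows_below_end r (r' - r.+1).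
by rewrite (_ : r + (r' - r.+1).+1 = r') ?lt_r'; [move/(_ isT); lia | lia].
Qed.

Lemma inD_left r : r < l -> inD alpha r (L r).
Proof. by move=> lt_r; rewrite /inD lt_r leqnn /=; have := part_pos lt_r; lia. Qed.

Lemma inD_right r : r < l -> inD alpha r (L r + (a r).-1).
Proof. by move=> lt_r; rewrite /inD lt_r /=; have := part_pos lt_r; lia. Qed.

Lemma inD_below r : r.+1 < l -> inD alpha r.+1 (L r).
Proof. by move=> lt_r; rewrite /inD lt_r (lcolS lt_r) /=; have := part_pos lt_r; lia. Qed.

Lemma row_end_le r : r < l -> L r + a r <= sumn alpha.
Proof.
move=> lt_r; have := sumn_drop r alpha; rewrite (drop_nth 0 lt_r) /=.
by have := sumn_pred (drop r.+1 alpha); rewrite /lcol; lia.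
Qed.

Lemma size_le_sumn : l <= sumn alpha.
Proof.
by move: alpha_comp; rewrite /is_composition; elim: alpha => //= x s IH /andP[x_pos /IH]; lia.
Qed.

Lemma inD_grid r j : inD alpha r j -> r < gsz alpha /\ j < gsz alpha.
Proof.
rewrite /inD /gsz => /andP[/andP[lt_r _] lt_j].
by have := row_end_le lt_r; have := size_le_sumn; lia.
Qed.

Lemma card_boxes : #|[pred p : cell alpha | inD alpha p.1 p.2]| = sumn alpha.
Proof.
transitivity (\sum_(r < gsz alpha) \sum_(j < gsz alpha) (inD alpha r j : nat)).
  by rewrite pair_big /= -sum1_card big_mkcond.
rewrite (eq_bigr (fun r : 'I_(gsz alpha) => if (r : nat) < l then a r else 0)); last first.
  move=> r _; case: ifP => lt_r; last by apply: big1 => j _; rewrite /inD lt_r.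
  rewrite /inD lt_r /=; apply: sum_interval.
  by apply: leq_trans (row_end_le lt_r) _; apply: leqnSn.
have := size_le_sumn.
rewrite -(big_mkord xpredT (fun r => if r < l then a r else 0)) => le_l.
rewrite (big_cat_nat _ (n := l)) //=; last by rewrite /gsz; lia.
rewrite (eq_big_nat _ _ (m := l) (F2 := fun=> 0)); last by move=> j /andP[le_j _]; rewrite ltnNge le_j.
rewrite (eq_big_nat _ _ (m := 0) (F2 := fun r => a r)); last by move=> j /andP[_ ->].
by rewrite sum_nat_const_nat muln0 addn0 big_mkord -sumn_big.
Qed.

End RibbonGeometry.

Section ValidFillings.
Variables (alpha : seq nat) (N : nat).
Implicit Types (T : filling alpha N) (p q : cell alpha).

Lemma filling_none T p : valid_filling T -> (T p == None) = ~~ inD alpha p.1 p.2.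
Proof. by case/andP=> /forallP/(_ p)/eqP. Qed.

Lemma filling_some T p : valid_filling T -> inD alpha p.1 p.2 -> exists x, T p = Some x.
Proof.
move=> T_valid p_in; have := filling_none p T_valid; rewrite p_in.
by case: (T p) => [x|] // _; exists x.
Qed.

Lemma filling_rules T p q x y : valid_filling T -> T p = Some x -> T q = Some y ->
 [&& ((p.1 == q.1) && ((p.2 : nat) < q.2)) ==> ((x : nat) <= y),
     ((p.2 == q.2) && ((p.1 : nat) < q.1)) ==> ((x : nat) <= y),
     [&& p.2 == q.2, p != q & odd x] ==> ((x : nat) != y)
   & [&& p.1 == q.1, p != q & ~~ odd x] ==> ((x : nat) != y)].
Proof. by case/andP=> _ /forallP/(_ p)/forallP/(_ q) + Tp Tq; rewrite Tp Tq. Qed.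

End ValidFillings.

(* The grid cell with given coordinates (meaningful inside the grid). *)
Definition mkcell alpha (i j : nat) : cell alpha := (inord i, inord j).

Lemma mkcell1 alpha i j : i < gsz alpha -> ((mkcell alpha i j).1 : nat) = i.
Proof. by move=> lt_i; rewrite /= inordK. Qed.

Lemma mkcell2 alpha i j : j < gsz alpha -> ((mkcell alpha i j).2 : nat) = j.
Proof. by move=> lt_j; rewrite /= inordK. Qed.

Lemma cell_eq alpha (p q : cell alpha) : (p.1 : nat) = q.1 -> (p.2 : nat) = q.2 -> p = q.
Proof. by case: p q => [x y] [u v] /= /val_inj -> /val_inj ->. Qed.

Lemma one_letter_eq (x y : 'I_(2 * 1)) : odd x = odd y -> x = y.
Proof.
move=> odd_xy; apply: val_inj; move: odd_xy (ltn_ord x) (ltn_ord y) => /=.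
by case: (nat_of_ord x) => [|[|?]] //; case: (nat_of_ord y) => [|[|?]].
Qed.

Section OneLetter.
Variable alpha : seq nat.
Hypothesis alpha_comp : is_composition alpha.
Local Notation L r := (lcol alpha r).
Local Notation l := (size alpha).
Implicit Types (T : filling alpha 1) (p : cell alpha).

(* A box right of the leftmost one of its row holds 1, since otherwise the
   row would contain two letters 1'. *)
Lemma one_letter_right T p x : valid_filling T -> inD alpha p.1 p.2 -> L p.1 < p.2 ->
  T p = Some x -> (x : nat) = 1.
Proof.
move=> T_valid p_in lt_Lp Tp.
have lt_p1 : p.1 < l by case/andP: p_in => /andP[].
have left_in := inD_left alpha_comp lt_p1; have [g1 g2] := inD_grid alpha_comp left_in.
pose p0 := mkcell alpha p.1 (L p.1).
have p0_1 : p0.1 = p.1 by apply: val_inj; rewrite /= inordK.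
have p0_2 : (p0.2 : nat) = L p.1 by rewrite mkcell2.
have [y Tp0] : exists y, T p0 = Some y by apply: filling_some; rewrite // p0_1 p0_2.
have p0_ne : p0 != p by apply/eqP => p0_p; move: lt_Lp; rewrite -p0_p p0_1 p0_2 ltnn.
have := filling_rules T_valid Tp0 Tp; rewrite p0_1 p0_2 eqxx lt_Lp p0_ne /=.
have := ltn_ord x; have := ltn_ord y.
by case: (nat_of_ord x) => [|[|?]] //; case: (nat_of_ord y) => [|[|?]] // _ _ /and4P[].
Qed.

(* The leftmost box of a row that is not the last one holds 1', since
   otherwise its column would contain two letters 1. *)
Lemma one_letter_left T p x : valid_filling T -> (p.2 : nat) = L p.1 -> (p.1).+1 < l ->
  T p = Some x -> (x : nat) = 0.
Proof.
move=> T_valid p2_L lt_p1 Tp.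
have below_in := inD_below alpha_comp lt_p1; have [g1 g2] := inD_grid alpha_comp below_in.
pose q := mkcell alpha (p.1).+1 (L p.1).
have q1 : (q.1 : nat) = (p.1).+1 by rewrite mkcell1.
have q2 : q.2 = p.2 by apply: val_inj; rewrite /= inordK // p2_L.
have [y Tq] : exists y, T q = Some y by apply: filling_some; rewrite // q1 q2 p2_L.
have pq_ne : p != q by apply/eqP => p_q; move: q1; rewrite -p_q; lia.
have := filling_rules T_valid Tp Tq; rewrite q1 q2 eqxx leqnn pq_ne /=.
have := ltn_ord x; have := ltn_ord y.
by case: (nat_of_ord x) => [|[|?]] //; case: (nat_of_ord y) => [|[|?]] // _ _ /and4P[].
Qed.

(* Hence a one-letter filling is determined by its bottom-left entry:
   A = [x_1^n] r_D is at most 2. *)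
Lemma one_letter_coef_le2 m : 0 < l -> rD_coef alpha [:: m] <= 2.
Proof.
move=> l_pos; rewrite /rD_coef.
pose q0 := mkcell alpha l.-1 0.
pose bottom_left (T : filling alpha 1) := if T q0 is Some x then odd x else false.
apply: leq_trans (@leq_card_in _ _ bottom_left _ _) _; last by rewrite card_bool.
move=> T T' /andP[T_valid _] /andP[T'_valid _] eq_bl; apply/ffunP => p.
case p_in: (inD alpha p.1 p.2); last first.
  have := filling_none p T_valid; have := filling_none p T'_valid.
  by rewrite p_in => /eqP -> /eqP ->.
have [x Tp] := filling_some T_valid p_in; have [x' T'p] := filling_some T'_valid p_in.
rewrite Tp T'p; congr Some.
have [/andP[lt_p1 le_Lp] _] := andP p_in.
have [lt_Lp | le_pL] := ltnP (L p.1) p.2.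
  by apply: val_inj; rewrite /= (one_letter_right T_valid p_in lt_Lp Tp)
    (one_letter_right T'_valid p_in lt_Lp T'p).
have p2_L : (p.2 : nat) = L p.1 by lia.
have [lt_p1S | le_lp] := ltnP (p.1).+1 l.
  by apply: val_inj; rewrite /= (one_letter_left T_valid p2_L lt_p1S Tp)
    (one_letter_left T'_valid p2_L lt_p1S T'p).
have [g1 g2] := inD_grid alpha_comp p_in.
have p_q0 : p = q0.
  have l_eq : l = (p.1).+1 by apply/eqP; rewrite eqn_leq le_lp lt_p1.
  have := size_le_sumn alpha_comp; rewrite /gsz l_eq => le_l.
  by apply: cell_eq; rewrite /q0 /= !inordK ?p2_L ?lcol_last // l_eq.
by apply: one_letter_eq; move: eq_bl; rewrite /bottom_left -p_q0 Tp T'p.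
Qed.

End OneLetter.

Definition var2 : 'I_2 := Ordinal (isT : 1 < 2).

Lemma var1_eq (k : 'I_2) : k != var2 -> k = ord0.
Proof. by case: k => [[|[|k]] lt_k] //= _; apply: val_inj. Qed.

Section PowerSums.
Variable lam : seq nat.
Hypothesis lam_part : is_partition lam.
Local Notation s := (size lam).

Lemma partition_part_pos (i : 'I_s) : 0 < nth 0 lam i.
Proof. by case/andP: lam_part => _ /all_nthP; apply; exact: ltn_ord. Qed.

Definition two_var_fun n (f : {ffun 'I_s -> 'I_2}) : bool :=
  [forall j : 'I_(size [:: n.-1; 1]),
     (\sum_(i | f i == j) nth 0 lam i) == nth 0 [:: n.-1; 1] j].

Section TwoVarFun.
Variables (n : nat) (f : {ffun 'I_s -> 'I_2}).
Hypothesis f_ok : two_var_fun n f.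

Lemma two_var_sum1 : \sum_(i | f i == ord0) nth 0 lam i = n.-1.
Proof. by move/forallP: f_ok => /(_ ord0)/eqP. Qed.

Lemma two_var_sum2 : \sum_(i | f i == var2) nth 0 lam i = 1.
Proof. by move/forallP: f_ok => /(_ var2)/eqP. Qed.

Lemma two_var_size : sumn lam = n.-1 + 1.
Proof.
rewrite sumn_big (bigID (fun i => f i == ord0)) /= two_var_sum1; congr (_ + _).
by apply: etrans two_var_sum2; apply: eq_bigl => i; case: (f i) => [[|[|k]] ?].
Qed.

Lemma two_var_uniq i k : f i == var2 -> f k == var2 -> i = k.
Proof.
move=> fi fk; apply/eqP/negPn/negP => ne_ik.
have := two_var_sum2; rewrite (bigD1 i) //= (bigD1 k) /=; last by rewrite fk eq_sym ne_ik.
by have := partition_part_pos i; have := partition_part_pos k; lia.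
Qed.

Lemma two_var_pick : exists k, [pick i | f i == var2] = Some k /\ f k == var2.
Proof.
case: pickP => [k fk|no_k]; first by exists k.
by have := two_var_sum2; rewrite big_pred0.
Qed.

End TwoVarFun.

(* Such a function is determined by the part sent to x_2. *)
Lemma two_var_coef_le_size n : psum_coef lam [:: n.-1; 1] <= s.
Proof.
case: (boolP [exists f, two_var_fun n f]) => [/existsP[f0 /two_var_pick[k0 _]]|/existsPn none];
  last first.
  by rewrite /psum_coef eq_card0 // => f; rewrite unfold_in; exact: negbTE (none f).
rewrite -[X in _ <= X](card_ord s) /psum_coef.
apply: (@leq_card_in _ _ (fun f : {ffun 'I_s -> 'I_2} => odflt k0 [pick i | f i == var2])).
move=> f f'; rewrite !unfold_in /= => f_ok f'_ok.
have [k [pick_k fk]] := two_var_pick f_ok; have [k' [pick_k' fk']] := two_var_pick f'_ok.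
rewrite pick_k pick_k' /= => eq_kk'; subst k'; apply/ffunP => i.
have [fi|fi] := boolP (f i == var2); first by rewrite (two_var_uniq f_ok fi fk) (eqP fk) (eqP fk').
have [f'i|f'i] := boolP (f' i == var2); first by move: fi; rewrite (two_var_uniq f'_ok f'i fk') fk.
by rewrite (var1_eq fi) (var1_eq f'i).
Qed.

Lemma one_var_coef_pos n : sumn lam = n -> 0 < psum_coef lam [:: n].
Proof.
move=> size_n; apply/card_gt0P; exists [ffun=> ord0]; rewrite unfold_in /=.
apply/forallP => j; rewrite (ord1 j) /= (eq_bigl xpredT) => [|i]; last by rewrite ffunE.
by rewrite -sumn_big size_n.
Qed.

Lemma psum_two_var_le n : 0 < n -> psum_coef lam [:: n.-1; 1] <= n * psum_coef lam [:: n].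
Proof.
move=> n_pos; have [coef0|] := posnP (psum_coef lam [:: n.-1; 1]); first by rewrite coef0.
case/card_gt0P => f; rewrite unfold_in /= => /two_var_size size_n.
have {}size_n : sumn lam = n by lia.
apply: leq_trans (leq_pmulr _ (one_var_coef_pos size_n)).
apply: leq_trans (two_var_coef_le_size n) _.
by rewrite -size_n; apply: size_le_sumn; case/andP: lam_part.
Qed.

End PowerSums.

Lemma p_positive_two_var_le coef n : 0 < n -> p_positive coef ->
  coef [:: n.-1; 1] <= n * coef [:: n].
Proof.
move=> n_pos [ls [c [ls_part [c_ge0 coefE]]]].
rewrite -(ler_nat rat) natrM !coefE mulr_sumr !big_seq.
apply: ler_sum => lam lam_in; rewrite mulrCA ler_wpM2l // -natrM ler_nat.
by apply: psum_two_var_le => //; move/allP: ls_part; apply.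
Qed.

Definition rcol alpha i := lcol alpha i + (nth 0 alpha i).-1.

(* Row i is a corner row when i > 0 and its rightmost box can be a corner:
   the row has length > 1 or is the last row. *)
Definition corner_row alpha i :=
  [&& 0 < i, i < size alpha & (1 < nth 0 alpha i) || (i.+1 == size alpha)].

Definition corner_rows alpha := [set r : 'I_(gsz alpha) | corner_row alpha r].
Definition inner_corner_rows alpha :=
  [set r : 'I_(gsz alpha) | corner_row alpha r && (r.+1 < size alpha)].

Section Corners.
Variable alpha : seq nat.
Hypothesis alpha_comp : is_composition alpha.
Local Notation l := (size alpha).

Lemma box_under_is_right r j : inD alpha r j -> 0 < r -> inD alpha r.-1 j -> j = rcol alpha r.
Proof.
move=> rj_in r_pos above_in; have [/andP[lt_r le_Lj] lt_j] := andP rj_in.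
have := lcolS (alpha := alpha) (r := r.-1); rewrite prednK // => /(_ lt_r).
move: above_in; rewrite /inD /rcol => /andP[/andP[_ le_L'j] _].
by have := part_pos alpha_comp lt_r; lia.
Qed.

(* Distinct corners lie in distinct corner rows. *)
Lemma corners_le : corners alpha <= #|corner_rows alpha|.
Proof.
rewrite /corners -(card_in_imset (f := fun p : cell alpha => p.1)); last first.
  move=> p q; rewrite !unfold_in /= => /and4P[p_in p_pos p_up _] /and4P[q_in q_pos q_up _] eq_pq.
  apply: cell_eq; first by rewrite eq_pq.
  by rewrite (box_under_is_right p_in p_pos p_up) (box_under_is_right q_in q_pos q_up) eq_pq.
apply: subset_leq_card; apply/subsetP => r /imsetP [p].
rewrite unfold_in /= => /and4P[p_in p_pos p_up p_corner] ->.
have lt_p1 : p.1 < l by case/andP: p_in => /andP[].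
rewrite inE /corner_row p_pos lt_p1 /=; apply/negPn/negP => /norP[not_long not_last].
have lt_p1S : (p.1).+1 < l by rewrite ltn_neqAle not_last lt_p1.
have a_1 : nth 0 alpha p.1 = 1.
  by apply/eqP; rewrite eqn_leq leqNgt not_long part_pos.
move/negP: p_corner; apply.
by rewrite (box_under_is_right p_in p_pos p_up) /rcol a_1 addn0; apply: inD_below.
Qed.

Lemma corner_rows_le : 0 < l -> #|corner_rows alpha| <= #|inner_corner_rows alpha| + 1.
Proof.
move=> l_pos; have := size_le_sumn alpha_comp => le_l.
apply: leq_trans (_ : #|(inord l.-1 : 'I_(gsz alpha)) |: inner_corner_rows alpha| <= _).
  apply: subset_leq_card; apply/subsetP => r; rewrite !inE => r_corner.
  rewrite r_corner /=; have [//|le_lr] := ltnP r.+1 l; first by rewrite orbT.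
  apply/orP; left; apply/eqP; apply: val_inj; rewrite /= inordK; last by rewrite /gsz; lia.
  by case/and3P: r_corner => _ lt_r _; lia.
by rewrite cardsU1 addnC leq_add2l leq_b1.
Qed.

End Corners.

(* The code placed at box (r, j) by the two-letter filling attached to a
   corner row i and to three choices s, x, y: the letter 2 or 2' (code 2 + s)
   at the right end of row i, the letter 1 right of the left end of every row,
   x at the left end of row i-1, y at the bottom-left box and 1' elsewhere. *)
Definition corner_code alpha i (s x y : bool) (r j : nat) : nat :=
  if (r == i) && (j == rcol alpha i) then (2 + s)
  else if lcol alpha r < j then 1
  else if r.+1 == i then nat_of_bool x
  else if r.+1 == size alpha then nat_of_bool y else 0.

Section CornerCode.
Variable alpha : seq nat.
Hypothesis alpha_comp : is_composition alpha.
Variables (i : nat) (s x y : bool).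
Hypothesis i_corner : corner_row alpha i.
Local Notation a r := (nth 0 alpha r).
Local Notation L r := (lcol alpha r).
Local Notation l := (size alpha).
Local Notation v := (corner_code alpha i s x y).
Local Notation is_rightend r j := ((r == i) && (j == rcol alpha i)).

Lemma code_le3 r j : v r j <= 3.
Proof. by rewrite /corner_code; case: s; case: x; case: y; repeat case: ifP. Qed.

Lemma code_ge2 r j : (2 <= v r j) = is_rightend r j.
Proof.
by rewrite /corner_code; case: s; case: x; case: y; case: ifP => H; rewrite ?H; repeat case: ifP.
Qed.

Lemma code_le1 r j : ~~ is_rightend r j -> v r j <= 1.
Proof. by move=> not_end; rewrite leqNgt code_ge2 (negbTE not_end). Qed.

Lemma code_zero r j : inD alpha r j -> v r j = 0 -> j = L r.
Proof.
move=> rj_in; rewrite /corner_code; case: ifP => // _; case: ifP => // not_right _.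
by case/andP: rj_in => /andP[_ le_Lj] _; lia.
Qed.

Lemma corner_rowP : [/\ 0 < i, i < l & (1 < a i) || (i.+1 == l)].
Proof. exact/and3P. Qed.

Lemma code_col r r' j : inD alpha r j -> inD alpha r' j -> r < r' -> v r j = 0 \/ v r j < v r' j.
Proof.
move=> rj_in r'j_in lt_rr'; have [j_L j_R'] := column_meet alpha_comp rj_in r'j_in lt_rr'.
have [i_pos lt_i i_long] := corner_rowP.
have lt_r' : r' < l by case/andP: r'j_in => /andP[].
have not_end : ~~ is_rightend r j.
  apply/negP => /andP[/eqP r_i]; rewrite j_L /rcol -r_i; have := part_pos alpha_comp lt_i.
  by move: i_long; rewrite -r_i => /orP[|/eqP]; lia.
suff [->|[r'_i j_end]] : v r j = 0 \/ (r' = i /\ j = rcol alpha i); first by left.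
  have : 2 <= v r' j by rewrite code_ge2 r'_i j_end !eqxx.
  by have := code_le1 not_end; right; lia.
move: not_end; rewrite /corner_code => /negbTE ->; rewrite j_L ltnn.
case: ifP => [/eqP r_i|_]; last by case: ifP => [/eqP r_last|_]; [lia | left].
have j_end : j = rcol alpha i by rewrite j_L /rcol -r_i (lcolS (r := r)) // r_i.
have [lt_r'i | lt_ir' | ->] := ltngtP r' i; [lia | | by right; split; rewrite -?j_L].
rewrite j_end in r'j_in.
have [+ _] := column_meet alpha_comp (inD_right alpha_comp lt_i) r'j_in lt_ir'.
rewrite /rcol; have := part_pos alpha_comp lt_i.
by move: i_long => /orP[|/eqP]; lia.
Qed.

Lemma code_row_mono r j j' : inD alpha r j -> inD alpha r j' -> j < j' -> v r j <= v r j'.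
Proof.
move=> rj_in rj'_in lt_jj'.
have not_end : ~~ is_rightend r j.
  apply/negP => /andP[/eqP r_i /eqP j_end]; move: rj'_in lt_jj'.
  by rewrite /inD j_end /rcol r_i => /andP[_ ?]; lia.
apply: leq_trans (code_le1 not_end) _.
have [end_j'|not_end'] := boolP (is_rightend r j'); first by apply: ltnW; rewrite code_ge2.
have lt_Lj' : L r < j' by case/andP: rj_in => /andP[_ ?] _; lia.
by rewrite /corner_code (negbTE not_end') lt_Lj'.
Qed.

Lemma code_col_mono r r' j : inD alpha r j -> inD alpha r' j -> r < r' -> v r j <= v r' j.
Proof. by move=> rj_in r'j_in /(code_col rj_in r'j_in) [->|/ltnW]. Qed.

Lemma code_col_unmarked r r' j : inD alpha r j -> inD alpha r' j -> r != r' ->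
  odd (v r j) -> v r j != v r' j.
Proof.
move=> rj_in r'j_in; case: ltngtP => // [lt_rr'|lt_r'r] _ odd_v.
  by case: (code_col rj_in r'j_in lt_rr') => [v0|/ltn_eqF ->]; first by rewrite v0 in odd_v.
case: (code_col r'j_in rj_in lt_r'r) => [v0|/gtn_eqF ->] //.
by rewrite v0; apply/eqP => v_0; rewrite v_0 in odd_v.
Qed.

Lemma code_row_marked r j j' : inD alpha r j -> inD alpha r j' -> j != j' ->
  ~~ odd (v r j) -> v r j != v r j'.
Proof.
move=> rj_in rj'_in ne_jj' even_v; apply/negP => /eqP eq_v; move/negP: ne_jj'; apply.
have [le2 | lt2] := leqP 2 (v r j).
  have le2' := le2; rewrite eq_v code_ge2 in le2'; rewrite code_ge2 in le2.
  by case/andP: le2 => _ /eqP ->; case/andP: le2' => _ /eqP ->.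
have v0 : v r j = 0 by move: even_v lt2; case: (v r j) => [|[|?]].
rewrite (code_zero rj_in v0) (code_zero rj'_in) //; by rewrite -eq_v.
Qed.

End CornerCode.

Definition corner_filling alpha i (s x y : bool) : filling alpha 2 :=
  [ffun p : cell alpha => if inD alpha p.1 p.2 then
      Some (@inord 3 (corner_code alpha i s x y p.1 p.2)) else None].

Section CornerFilling.
Variable alpha : seq nat.
Hypothesis alpha_comp : is_composition alpha.
Variables (i : nat) (s x y : bool).
Hypothesis i_corner : corner_row alpha i.
Local Notation v := (corner_code alpha i s x y).
Local Notation T := (corner_filling alpha i s x y).

Lemma corner_filling_valid : valid_filling T.
Proof.
apply/andP; split; first by apply/forallP => p; rewrite ffunE; case: inD.
apply/forallP => -[r j]; apply/forallP => -[r' j']; rewrite !ffunE /=.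
case rj_in: (inD alpha r j) => //; case r'j'_in: (inD alpha r' j') => //.
rewrite !inordK ?ltnS ?code_le3 // xpair_eqE negb_and.
apply/and4P; split; apply/implyP.
- case/andP => /eqP eq_r lt_j; rewrite eq_r in rj_in *.
  exact: code_row_mono rj_in r'j'_in lt_j.
- case/andP => /eqP eq_j lt_r; rewrite eq_j in rj_in *.
  exact: (code_col_mono alpha_comp _ _ _ i_corner rj_in r'j'_in lt_r).
- case/and3P => /eqP eq_j; rewrite eq_j eqxx orbF in rj_in * => ne_r.
  exact: (code_col_unmarked alpha_comp i_corner rj_in r'j'_in ne_r).
- case/and3P => /eqP eq_r; rewrite eq_r eqxx /= in rj_in * => ne_j.
  exact: code_row_marked rj_in r'j'_in ne_j.
Qed.

Definition corner_cell := mkcell alpha i (rcol alpha i).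

Lemma corner_cell_in : inD alpha i (rcol alpha i).
Proof. by apply: inD_right => //; case/and3P: i_corner. Qed.

Lemma corner_cell_grid : i < gsz alpha /\ rcol alpha i < gsz alpha.
Proof. exact: (inD_grid alpha_comp corner_cell_in). Qed.

Lemma corner_cellE (p : cell alpha) :
  ((p.1 : nat) == i) && ((p.2 : nat) == rcol alpha i) = (p == corner_cell).
Proof.
have [g1 g2] := corner_cell_grid.
apply/idP/eqP => [/andP[/eqP p1 /eqP p2]|->]; last by rewrite /= !inordK // !eqxx.
by apply: cell_eq; rewrite /= !inordK.
Qed.

Lemma corner_filling_content :
  [forall k : 'I_2, content_at T k == nth 0 [:: (sumn alpha).-1; 1] k].
Proof.
have [g1 g2] := corner_cell_grid.
have cell_in : corner_cell \in [pred p : cell alpha | inD alpha p.1 p.2].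
  by rewrite unfold_in /= !inordK ?corner_cell_in.
apply/forallP => -[[|[|k]] lt_k] //=; apply/eqP; rewrite /content_at.
- have := cardD1 corner_cell [pred p : cell alpha | inD alpha p.1 p.2].
  rewrite cell_in card_boxes // => ->; rewrite add1n /=.
  apply: eq_card => p; rewrite !unfold_in /= ffunE.
  case p_in: (inD alpha p.1 p.2); last by rewrite andbF.
  rewrite andbT inordK ?ltnS ?code_le3 // -corner_cellE -(@code_ge2 alpha i s x y).
  by case: (v p.1 p.2) => [|[|?]].
- apply: (@eq_card1 _ corner_cell) => p; rewrite unfold_in /= ffunE inE.
  case p_in: (inD alpha p.1 p.2); last first.
    by apply/esym/negbTE; apply: contraFN p_in => /eqP ->; rewrite /= !inordK ?corner_cell_in.
  rewrite inordK ?ltnS ?code_le3 // -corner_cellE -(@code_ge2 alpha i s x y).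
  by have := code_le3 alpha i s x y p.1 p.2; case: (v p.1 p.2) => [|[|[|[|?]]]].
Qed.

End CornerFilling.

Lemma corner_filling_code alpha (alpha_comp : is_composition alpha) i s x y i' s' x' y' r j :
  inD alpha r j -> corner_filling alpha i s x y = corner_filling alpha i' s' x' y' ->
  corner_code alpha i s x y r j = corner_code alpha i' s' x' y' r j.
Proof.
move=> rj_in eqT; have [g1 g2] := inD_grid alpha_comp rj_in.
have := congr1 (fun T : filling alpha 2 => T (mkcell alpha r j)) eqT.
by rewrite !ffunE /= !inordK // rj_in => -[] /(congr1 val) /=; rewrite !inordK // ltnS code_le3.
Qed.

Section LowerBound.
Variable alpha : seq nat.
Hypothesis alpha_comp : is_composition alpha.
Hypothesis alpha_nonempty : 0 < size alpha.
Local Notation l := (size alpha).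

(* Parameters (i, s, x, y) of the fillings counted in the lower bound: the
   choice y of the bottom-left letter only matters when i is not the last
   row, so y is fixed to false for the other corner rows. *)
Definition corner_params := ((('I_(gsz alpha) * bool) * bool) * bool)%type.

Definition params_filling (t : corner_params) :=
  corner_filling alpha t.1.1.1 t.1.1.2 t.1.2 t.2.

Definition free_params : {set corner_params} :=
  setX (setX (setX (corner_rows alpha) [set: bool]) [set: bool]) [set false] :|:
  setX (setX (setX (inner_corner_rows alpha) [set: bool]) [set: bool]) [set true].

Lemma card_free_params :
  #|free_params| = 4 * #|corner_rows alpha| + 4 * #|inner_corner_rows alpha|.
Proof.
rewrite cardsU; set S1 := setX _ _; set S2 := setX _ _.
have -> : S1 :&: S2 = set0 by apply/setP => t; rewrite !inE; case: t.2; rewrite ?andbF.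
by rewrite cards0 subn0 !cardsX !cardsT card_bool !cards1; lia.
Qed.

Lemma free_paramsP (t : corner_params) : t \in free_params ->
  corner_row alpha t.1.1.1 /\ (t.2 -> (t.1.1.1 : nat).+1 < l).
Proof.
rewrite !inE !andbT; case: t.2; rewrite ?orbF ?andbF ?orbF /=.
  by case/andP => /andP[-> ->].
by case/andP => ->.
Qed.

(* Distinct parameters give distinct fillings: i and s are read at the
   letter 2, x at the left end of row i-1 and y at the bottom-left box. *)
Lemma params_filling_inj : {in free_params &, injective params_filling}.
Proof.
move=> [[[i s] x] y] [[[i' s'] x'] y'] /free_paramsP /= [i_corner y_inner]
  /free_paramsP /= [i'_corner y'_inner] eqT.
have read := fun r j (rj_in : inD alpha r j) => corner_filling_code alpha_comp rj_in eqT.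
have code_i := read _ _ (corner_cell_in alpha_comp i_corner).
have : 2 <= corner_code alpha i' s' x' y' i (rcol alpha i) by rewrite -code_i code_ge2 !eqxx.
rewrite code_ge2 => /andP[/eqP eq_i _]; have eq_ii' : i = i' by apply: val_inj.
subst i'; move: code_i; rewrite /corner_code !eqxx /= => -[eq_s].
have {eq_s} eq_ss' : s = s' by move: eq_s; case: (s); case: (s').
subst s'; have [i_pos lt_i _] := and3P i_corner.
have above_in : inD alpha (i : nat).-1 (lcol alpha (i : nat).-1) by apply: inD_left; lia.
have eq_xx' : x = x'.
  have ne_i : ((i : nat).-1 == i) = false by lia.
  move: (read _ _ above_in); rewrite /corner_code /= ltnn (prednK i_pos) eqxx ne_i.
  by case: (x); case: (x').
subst x'; suff -> : y = y' by [].
have [y_or | /norP[/negbTE-> /negbTE->]] := boolP (y || y') => //.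
have lt_iS : (i : nat).+1 < l by case/orP: y_or => [/y_inner|/y'_inner].
have bottom_in : inD alpha l.-1 (lcol alpha l.-1) by apply: inD_left; lia.
have [ne_i ne_iS] : (l.-1 == i) = false /\ (l == i) = false by split; lia.
move: (read _ _ bottom_in); rewrite /corner_code /= ltnn (prednK alpha_nonempty) eqxx ne_i ne_iS.
by case: (y); case: (y').
Qed.

Lemma two_letter_coef_ge :
  4 * #|corner_rows alpha| + 4 * #|inner_corner_rows alpha|
    <= rD_coef alpha [:: (sumn alpha).-1; 1].
Proof.
rewrite -card_free_params -(card_in_imset params_filling_inj).
apply: subset_leq_card; apply/subsetP => T /imsetP[t t_free ->].
have [t_corner _] := free_paramsP t_free.
rewrite unfold_in /= /params_filling corner_filling_valid //.
exact: corner_filling_content.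
Qed.

End LowerBound.

Unset Implicit Arguments.

Theorem mainTheorem15 (alpha : seq nat) :
  is_composition alpha ->
  nth 0 alpha 0 = 1 ->
  ((1 / 2 + (sumn alpha)%:R / 4 : rat) < (corners alpha)%:R)%R ->
  ~ p_positive (rD_coef alpha).
Proof.
move=> alpha_comp alpha1 many_corners rD_ppos.
have l_pos : 0 < size alpha by move: alpha1; case: (alpha).
have n_pos : 0 < sumn alpha by have := size_le_sumn alpha_comp; lia.
have A_le2 := one_letter_coef_le2 alpha_comp (sumn alpha) l_pos.
have B_ge := two_letter_coef_ge alpha_comp l_pos.
have B_le := p_positive_two_var_le n_pos rD_ppos.
have c_le := corners_le alpha_comp.
have R_le := corner_rows_le alpha_comp l_pos.
have : 4 * corners alpha <= sumn alpha + 2.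
  by have := leq_mul (leqnn (sumn alpha)) A_le2; lia.
rewrite -(ler_nat rat) natrD natrM; lra.
Qed.
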